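(* Let $a,b>0$, $c=a+b$, and $F(x)=F(a,b;c;x)$ for $|x|<1$. Then (1) $\log F(x)$ is convex on $(0,1)$; (2) $t\mapsto\log F(1-e^{-t})$ is concave on $(0,\infty)$; (3) $t\mapsto F(1-e^{-t})$ is convex on $(0,\infty)$. In particular, $$F\Big(\frac{x+y}{2}\Big)\le\sqrt{F(x)F(y)}\le F\big(1-\sqrt{(1-x)(1-y)}\big)\le\frac{F(x)+F(y)}{2}$$ for all $x,y\in(0,1)$, with equality if and only if $x=y$.
   Context: $F(a,b;c;x)=\sum_{n=0}^\infty\frac{(a,n)(b,n)}{(c,n)\,n!}x^n$ for $|x|<1$ is the Gaussian hypergeometric function, where $(a,0)=1$ and $(a,n)=a(a+1)\cdots(a+n-1)$ for $n\ge1$. *)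

From Stdlib Require Import Reals.
From Coquelicot Require Import Coquelicot.
Open Scope R_scope.

Fixpoint poch (a : R) (n : nat) : R :=
  match n with
  | O => 1
  | S m => poch a m * (a + INR m)
  end.

(* Gaussian hypergeometric function F(a,b;c;x) = sum_n (a,n)(b,n)/((c,n) n!) x^n,
   as a Coquelicot series (meaningful for |x| < 1, where it converges). *)
Definition hyp2F1 (a b c x : R) : R :=
  Series (fun n => poch a n * poch b n / (poch c n * INR (Factorial.fact n)) * x ^ n).

Definition convex_on (f : R -> R) (lo hi : Rbar) : Prop :=
  forall x y t, Rbar_lt lo x -> Rbar_lt x hi -> Rbar_lt lo y -> Rbar_lt y hi ->
    0 <= t <= 1 ->
    f (t * x + (1 - t) * y) <= t * f x + (1 - t) * f y.

Definition concave_on (f : R -> R) (lo hi : Rbar) : Prop :=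
  forall x y t, Rbar_lt lo x -> Rbar_lt x hi -> Rbar_lt lo y -> Rbar_lt y hi ->
    0 <= t <= 1 ->
    t * f x + (1 - t) * f y <= f (t * x + (1 - t) * y).

From Stdlib Require Import Reals Lra Lia.
From Coquelicot Require Import Coquelicot.
Open Scope R_scope.

(* Write F (x) = sum c_n x^n.  Then F' (x) = sum rho_n c_n x^n with
   rho_n = (a + n) (b + n) / (a + b + n) increasing, so F'/F is a mean of the
   increasing sequence rho with weights c_n x^n; such a mean increases with x,
   hence ln F is convex.  In the variable t, with x = 1 - exp (- t), we have
   dF/dt = (1 - x) F' (x) = a b K (x) where K (x) = sum c_n x^n / (a + b + n);
   this is the one place where c = a + b is used.  K has positive coefficients,
   so F (1 - exp (- t)) is convex, and F / K is the mean of the increasing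
   sequence a + b + n with weights c_n x^n / (a + b + n), so the logarithmic
   derivative a b K / F decreases and ln F (1 - exp (- t)) is concave.  The
   three convexity statements are strict, and at the midpoint they give the
   chain of means, with equality only on the diagonal. *)

Lemma PSeries_Un_cv (e : nat -> R) (x : R) :
  ex_pseries e x -> Un_cv (sum_f_R0 (fun n => e n * x ^ n)) (PSeries e x).
Proof. intros H. apply is_pseries_Reals, PSeries_correct, H. Qed.

Lemma PSeries_ge_coef_0 (e : nat -> R) (x : R) :
  (forall n, 0 <= e n) -> 0 <= x -> ex_pseries e x -> e 0%nat <= PSeries e x.
Proof.
  intros e_ge0 x_ge0 ex_x.
  rewrite <- (Rmult_1_r (e 0%nat)).
  apply (sum_incr (fun n => e n * x ^ n) 0 _ (PSeries_Un_cv e x ex_x)).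
  intros n. apply Rmult_le_pos; [apply e_ge0 | apply pow_le, x_ge0].
Qed.

Lemma PSeries_lt_of_coef_nonneg (e : nat -> R) (x y : R) :
  (forall n, 0 <= e n) -> 0 < e 1%nat -> 0 <= x -> x < y ->
  ex_pseries e x -> ex_pseries e y -> PSeries e x < PSeries e y.
Proof.
  intros e_ge0 e1_gt0 x_ge0 x_lt_y ex_x ex_y.
  assert (diff_cv : Un_cv (sum_f_R0 (fun n => e n * (y ^ n - x ^ n)))
                          (PSeries e y - PSeries e x)).
  { apply Un_cv_ext with (fun N => sum_f_R0 (fun n => e n * y ^ n) N
                                   - sum_f_R0 (fun n => e n * x ^ n) N).
    - intros N. rewrite <- minus_sum. apply sum_eq. intros n _. ring.
    - apply CV_minus; apply PSeries_Un_cv; assumption. }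
  assert (first_terms := sum_incr _ 1 _ diff_cv).
  simpl in first_terms.
  assert (0 < e 1%nat * (y - x)) by (apply Rmult_lt_0_compat; lra).
  enough (0 < PSeries e y - PSeries e x) by lra.
  eapply Rlt_le_trans; [| apply first_terms].
  - lra.
  - intros n. apply Rmult_le_pos; [apply e_ge0 |].
    enough (x ^ n <= y ^ n) by lra. apply pow_incr; lra.
Qed.

Lemma pow_cross_le (x y : R) (i N : nat) :
  0 <= x <= y -> (i <= N)%nat -> x ^ N * y ^ i <= y ^ N * x ^ i.
Proof.
  intros hxy hiN. replace N with (i + (N - i))%nat by lia. rewrite !pow_add.
  assert (0 <= x ^ i) by (apply pow_le; lra).
  assert (0 <= y ^ i) by (apply pow_le; lra).
  assert (x ^ (N - i) <= y ^ (N - i)) by (apply pow_incr; lra).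
  assert (0 <= x ^ i * y ^ i) by (apply Rmult_le_pos; assumption).
  nra.
Qed.

Lemma sum_f_R0_cross (rho beta : nat -> R) (r p q x y : R) (N : nat) :
  sum_f_R0 (fun i => beta i * (r - rho i) * (p * y ^ i - q * x ^ i)) N =
  r * p * sum_f_R0 (fun n => beta n * y ^ n) N - r * q * sum_f_R0 (fun n => beta n * x ^ n) N
  - p * sum_f_R0 (fun n => rho n * beta n * y ^ n) N
  + q * sum_f_R0 (fun n => rho n * beta n * x ^ n) N.
Proof. induction N as [|N IH]; simpl; [ring | rewrite IH; ring]. Qed.

(* The cross difference of partial sums decreases, each step adding a sum of terms
   (rho_(N+1) - rho_i) (x^(N+1) y^i - y^(N+1) x^i) <= 0, and is already negative
   after the first two terms. *)
Section WeightedMean.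

Variables (rho beta : nat -> R) (x y : R).
Hypothesis beta_pos : forall n, 0 < beta n.
Hypothesis rho_growing : Un_growing rho.
Hypotheses (x_ge0 : 0 <= x) (x_lt_y : x < y).

Let S_rho (z : R) (N : nat) := sum_f_R0 (fun n => rho n * beta n * z ^ n) N.
Let S_1 (z : R) (N : nat) := sum_f_R0 (fun n => beta n * z ^ n) N.
Let cross (N : nat) := S_rho x N * S_1 y N - S_rho y N * S_1 x N.

Lemma weighted_cross_S (N : nat) :
  cross (S N) = cross N + beta (S N) *
    sum_f_R0 (fun i => beta i * (rho (S N) - rho i) * (x ^ S N * y ^ i - y ^ S N * x ^ i)) N.
Proof.
  unfold cross, S_rho, S_1. rewrite !tech5, sum_f_R0_cross. ring.
Qed.

Lemma weighted_cross_decreasing : Un_decreasing cross.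
Proof.
  intros N. rewrite weighted_cross_S.
  enough (sum_f_R0 (fun i => beta i * (rho (S N) - rho i)
            * (x ^ S N * y ^ i - y ^ S N * x ^ i)) N <= 0).
  { assert (0 < beta (S N)) by apply beta_pos. nra. }
  rewrite <- (Rmult_0_l (INR (S N))), <- sum_cte.
  apply sum_Rle. intros i hi.
  assert (0 <= beta i * (rho (S N) - rho i)).
  { apply Rmult_le_pos; [left; apply beta_pos |].
    assert (rho (S N) >= rho i) by (apply growing_prop; [assumption | lia]). lra. }
  assert (x ^ S N * y ^ i <= y ^ S N * x ^ i) by (apply pow_cross_le; [lra | lia]).
  nra.
Qed.

Lemma PSeries_weighted_mean_lt : rho 0%nat < rho 1%nat ->
  ex_pseries beta x -> ex_pseries beta y ->
  ex_pseries (fun n => rho n * beta n) x -> ex_pseries (fun n => rho n * beta n) y ->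
  PSeries (fun n => rho n * beta n) x / PSeries beta x
  < PSeries (fun n => rho n * beta n) y / PSeries beta y.
Proof.
  intros rho_01 ex_bx ex_by ex_rx ex_ry.
  assert (cross_1 : cross 1 < 0).
  { unfold cross, S_rho, S_1. simpl.
    assert (0 < beta 0%nat * beta 1%nat * (y - x) * (rho 1%nat - rho 0%nat)).
    { repeat apply Rmult_lt_0_compat; try apply beta_pos; lra. }
    nra. }
  assert (cross_cv : Un_cv cross (PSeries (fun n => rho n * beta n) x * PSeries beta y
                                  - PSeries (fun n => rho n * beta n) y * PSeries beta x)).
  { apply CV_minus; apply CV_mult; apply PSeries_Un_cv; assumption. }
  assert (limit_le := decreasing_ineq _ _ weighted_cross_decreasing cross_cv 1).
  assert (0 < PSeries beta x).
  { eapply Rlt_le_trans; [apply beta_pos | apply PSeries_ge_coef_0; auto].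
    intros n; left; apply beta_pos. }
  assert (0 < PSeries beta y).
  { eapply Rlt_le_trans; [apply beta_pos | apply PSeries_ge_coef_0; auto; try lra].
    intros n; left; apply beta_pos. }
  apply Rmult_lt_reg_r with (PSeries beta x * PSeries beta y); [nra |].
  field_simplify; lra.
Qed.

End WeightedMean.

Definition strictly_convex_on (f : R -> R) (lo hi : Rbar) : Prop :=
  forall x y t : R, Rbar_lt lo x -> Rbar_lt x hi -> Rbar_lt lo y -> Rbar_lt y hi ->
    x <> y -> 0 < t < 1 ->
    f (t * x + (1 - t) * y) < t * f x + (1 - t) * f y.

Section ConvexityFromDerivative.

Variables (lo hi : Rbar) (f f' : R -> R).
Hypothesis f_derive : forall z : R, Rbar_lt lo z -> Rbar_lt z hi -> is_derive f z (f' z).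
Hypothesis f'_increasing :
  forall u v : R, Rbar_lt lo u -> Rbar_lt v hi -> u < v -> f' u < f' v.

Lemma convex_combination_lt (x y t : R) : Rbar_lt lo x -> Rbar_lt y hi -> x < y -> 0 < t < 1 ->
  f (t * x + (1 - t) * y) < t * f x + (1 - t) * f y.
Proof.
  intros lo_x y_hi x_lt_y ht.
  set (z := t * x + (1 - t) * y).
  assert (x_lt_z : x < z) by (unfold z; nra).
  assert (z_lt_y : z < y) by (unfold z; nra).
  assert (derive_on : forall u v, x <= u -> v <= y -> forall c, u <= c <= v ->
                        derivable_pt_lim f c (f' c)).
  { intros u v xu vy c hc. apply is_derive_Reals, f_derive.
    - apply Rbar_lt_le_trans with x; [assumption | simpl; lra].
    - apply Rbar_le_lt_trans with y; [simpl; lra | assumption]. }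
  destruct (MVT_cor2 f f' x z x_lt_z (derive_on x z (Rle_refl x) (Rlt_le _ _ z_lt_y)))
    as [k1 [mvt1 hk1]].
  destruct (MVT_cor2 f f' z y z_lt_y (derive_on z y (Rlt_le _ _ x_lt_z) (Rle_refl y)))
    as [k2 [mvt2 hk2]].
  assert (f' k1 < f' k2).
  { apply f'_increasing; [| | lra].
    - apply Rbar_lt_le_trans with x; [assumption | simpl; lra].
    - apply Rbar_le_lt_trans with y; [simpl; lra | assumption]. }
  replace (z - x) with ((1 - t) * (y - x)) in mvt1 by (unfold z; ring).
  replace (y - z) with (t * (y - x)) in mvt2 by (unfold z; ring).
  assert (0 < t * (1 - t) * (y - x) * (f' k2 - f' k1)) by
    (repeat apply Rmult_lt_0_compat; lra).
  nra.
Qed.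

Lemma strictly_convex_on_of_derive_increasing : strictly_convex_on f lo hi.
Proof.
  intros x y t lo_x x_hi lo_y y_hi x_ne_y ht.
  destruct (Rlt_or_le x y) as [x_lt_y | y_le_x].
  - apply convex_combination_lt; assumption.
  - replace (t * x + (1 - t) * y) with ((1 - t) * y + (1 - (1 - t)) * x) by ring.
    assert (H := convex_combination_lt y x (1 - t) lo_y x_hi ltac:(lra) ltac:(lra)).
    lra.
Qed.

End ConvexityFromDerivative.

Lemma strictly_convex_on_convex_on (f : R -> R) (lo hi : Rbar) :
  strictly_convex_on f lo hi -> convex_on f lo hi.
Proof.
  intros f_convex x y t lo_x x_hi lo_y y_hi ht.
  destruct x as [x | |]; [| now destruct hi | now destruct lo].
  destruct y as [y | |]; [| now destruct hi | now destruct lo].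
  simpl.
  destruct (Req_dec x y) as [<- | x_ne_y].
  { replace (t * x + (1 - t) * x) with x by ring. lra. }
  destruct (Req_dec t 0) as [-> | t_ne_0].
  { replace (0 * x + (1 - 0) * y) with y by ring. lra. }
  destruct (Req_dec t 1) as [-> | t_ne_1].
  { replace (1 * x + (1 - 1) * y) with x by ring. lra. }
  left. apply f_convex; auto. lra.
Qed.

Lemma convex_on_opp_concave_on (f : R -> R) (lo hi : Rbar) :
  convex_on (fun z => - f z) lo hi -> concave_on f lo hi.
Proof.
  intros f_convex x y t lo_x x_hi lo_y y_hi ht.
  assert (H := f_convex x y t lo_x x_hi lo_y y_hi ht). simpl in H. lra.
Qed.

Lemma strictly_convex_on_midpoint (f : R -> R) (lo hi : Rbar) (x y : R) :
  strictly_convex_on f lo hi -> Rbar_lt lo x -> Rbar_lt x hi -> Rbar_lt lo y -> Rbar_lt y hi ->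
  x <> y -> f ((x + y) / 2) < (f x + f y) / 2.
Proof.
  intros f_convex lo_x x_hi lo_y y_hi x_ne_y.
  assert (H := f_convex x y (/ 2) lo_x x_hi lo_y y_hi x_ne_y ltac:(lra)).
  replace ((x + y) / 2) with (/ 2 * x + (1 - / 2) * y) by field. lra.
Qed.

(* [hyp2F1 a b c x] is convertible to [PSeries (hyp2F1_coef a b c) x]. *)
Definition hyp2F1_coef (a b c : R) (n : nat) : R :=
  poch a n * poch b n / (poch c n * INR (Factorial.fact n)).

Lemma poch_pos (a : R) (n : nat) : 0 < a -> 0 < poch a n.
Proof.
  intros ha. induction n as [|n IH]; simpl; [lra |].
  apply Rmult_lt_0_compat; [assumption |]. pose proof (pos_INR n). lra.
Qed.

Section Coefficients.

Variables a b c : R.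
Hypotheses (ha : 0 < a) (hb : 0 < b) (hc : 0 < c).

Lemma hyp2F1_coef_pos (n : nat) : 0 < hyp2F1_coef a b c n.
Proof.
  unfold hyp2F1_coef. pose proof (INR_fact_lt_0 n).
  apply Rdiv_lt_0_compat; apply Rmult_lt_0_compat; auto using poch_pos.
Qed.

Lemma hyp2F1_coef_0 : hyp2F1_coef a b c 0 = 1.
Proof. unfold hyp2F1_coef. simpl. field. Qed.

Lemma hyp2F1_coef_S (n : nat) :
  hyp2F1_coef a b c (S n) =
  hyp2F1_coef a b c n * ((a + INR n) * (b + INR n)) / ((c + INR n) * INR (S n)).
Proof.
  unfold hyp2F1_coef. simpl poch.
  change (Factorial.fact (S n)) with (S n * Factorial.fact n)%nat.
  rewrite mult_INR.
  pose proof (INR_fact_lt_0 n). pose proof (poch_pos c n hc). pose proof (pos_INR n).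
  assert (0 < INR (S n)) by (apply lt_0_INR; lia).
  field. repeat split; lra.
Qed.

Lemma CV_radius_hyp2F1_coef : CV_radius (hyp2F1_coef a b c) = 1.
Proof.
  rewrite <- Rinv_1.
  apply CV_radius_finite_DAlembert; [intros n; apply Rgt_not_eq, hyp2F1_coef_pos | lra |].
  set (u n := / INR (S n)).
  assert (u_lim : is_lim_seq u 0).
  { apply (is_lim_seq_incr_1 (fun n => / INR n)).
    replace (Finite 0) with (Rbar_inv p_infty) by reflexivity.
    apply is_lim_seq_inv; [apply is_lim_seq_INR | discriminate]. }
  apply is_lim_seq_ext with
    (fun n => (1 + (a - 1) * u n) * (1 + (b - 1) * u n) / (1 + (c - 1) * u n)).
  - intros n.
    rewrite Rabs_pos_eq by (left; apply Rdiv_lt_0_compat; apply hyp2F1_coef_pos).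
    rewrite hyp2F1_coef_S.
    pose proof (hyp2F1_coef_pos n). pose proof (pos_INR n).
    unfold u. rewrite S_INR. field. repeat split; lra.
  - assert (affine_lim : forall k, is_lim_seq (fun n => 1 + k * u n) 1).
    { intros k. replace (Finite 1) with (Finite (1 + k * 0)) by (f_equal; ring).
      apply is_lim_seq_plus'; [apply is_lim_seq_const | exact (is_lim_seq_scal_l u k 0 u_lim)]. }
    replace (Finite 1) with (Finite (1 * 1 / 1)) by (f_equal; field).
    apply is_lim_seq_div'; [apply is_lim_seq_mult' | | lra]; apply affine_lim.
Qed.

Lemma hyp2F1_coef_in_radius (x : R) : -1 < x < 1 ->
  Rbar_lt (Rabs x) (CV_radius (hyp2F1_coef a b c)).
Proof. intros hx. rewrite CV_radius_hyp2F1_coef. simpl. apply Rabs_def1; lra. Qed.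

End Coefficients.

Definition hyp2F1_deriv_ratio (a b c : R) (n : nat) : R :=
  (a + INR n) * (b + INR n) / (c + INR n).

Lemma PS_derive_hyp2F1_coef (a b c : R) (n : nat) : 0 < c ->
  PS_derive (hyp2F1_coef a b c) n = hyp2F1_deriv_ratio a b c n * hyp2F1_coef a b c n.
Proof.
  intros hc. unfold PS_derive, hyp2F1_deriv_ratio. rewrite hyp2F1_coef_S by assumption.
  pose proof (pos_INR n). assert (0 < INR (S n)) by (apply lt_0_INR; lia).
  field. lra.
Qed.

Lemma hyp2F1_deriv_ratio_lt_S (a b : R) (n : nat) : 0 < a -> 0 < b ->
  hyp2F1_deriv_ratio a b (a + b) n < hyp2F1_deriv_ratio a b (a + b) (S n).
Proof.
  intros ha hb. unfold hyp2F1_deriv_ratio. rewrite S_INR.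
  pose proof (pos_INR n). set (m := INR n) in *.
  apply Rmult_lt_reg_r with ((a + b + m) * (a + b + (m + 1))); [nra |].
  field_simplify; [| lra | lra].
  nra.
Qed.

Definition hyp2F1_kcoef (a b : R) (n : nat) : R :=
  hyp2F1_coef a b (a + b) n / (a + b + INR n).

Lemma PS_derive_hyp2F1_coef_diff (a b : R) (n : nat) : 0 < a -> 0 < b ->
  PS_minus (PS_derive (hyp2F1_coef a b (a + b)))
           (PS_incr_1 (PS_derive (hyp2F1_coef a b (a + b)))) n
  = a * b * hyp2F1_kcoef a b n.
Proof.
  intros ha hb. unfold PS_minus, PS_incr_1, hyp2F1_kcoef, plus, opp; simpl.
  rewrite PS_derive_hyp2F1_coef by lra. unfold hyp2F1_deriv_ratio.
  destruct n as [|n].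
  - rewrite hyp2F1_coef_0. unfold zero; simpl. field. lra.
  - unfold PS_derive. pose proof (pos_INR n). rewrite !S_INR. field. lra.
Qed.

Lemma is_derive_one_sub_exp_opp (t : R) : is_derive (fun t => 1 - exp (- t)) t (exp (- t)).
Proof. auto_derive; [exact I | ring]. Qed.

Lemma one_sub_exp_opp_bounds (t : R) : 0 < t -> 0 < 1 - exp (- t) < 1.
Proof.
  intros ht. pose proof (exp_pos (- t)).
  assert (exp (- t) < 1) by (rewrite <- exp_0; apply exp_increasing; lra). lra.
Qed.

Lemma one_sub_exp_opp_lt (u v : R) : u < v -> 1 - exp (- u) < 1 - exp (- v).
Proof. intros huv. assert (exp (- v) < exp (- u)) by (apply exp_increasing; lra). lra. Qed.

Lemma ln_sqrt_mult (p q : R) : 0 < p -> 0 < q -> ln (sqrt (p * q)) = (ln p + ln q) / 2.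
Proof.
  intros hp hq. assert (hs : 0 < sqrt (p * q)) by (apply sqrt_lt_R0; nra).
  rewrite <- ln_mult by assumption.
  rewrite <- (sqrt_sqrt (p * q)) at 2 by nra.
  rewrite ln_mult by assumption. field.
Qed.

Lemma exp_opp_mean_ln_one_sub (x y : R) : x < 1 -> y < 1 ->
  exp (- ((- ln (1 - x) + - ln (1 - y)) / 2)) = sqrt ((1 - x) * (1 - y)).
Proof.
  intros hx hy.
  replace (- ((- ln (1 - x) + - ln (1 - y)) / 2)) with ((ln (1 - x) + ln (1 - y)) / 2) by field.
  rewrite <- ln_sqrt_mult by lra. apply exp_ln, sqrt_lt_R0. nra.
Qed.

Lemma one_sub_sqrt_mul_bounds (x y : R) : 0 < x < 1 -> 0 < y < 1 ->
  0 < 1 - sqrt ((1 - x) * (1 - y)) < 1.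
Proof.
  intros hx hy. rewrite <- exp_opp_mean_ln_one_sub by lra.
  apply one_sub_exp_opp_bounds.
  assert (ln (1 - x) < 0) by (rewrite <- ln_1; apply ln_increasing; lra).
  assert (ln (1 - y) < 0) by (rewrite <- ln_1; apply ln_increasing; lra).
  lra.
Qed.

(* [1 - sqrt ((1 - x) * (1 - y))] is the image of the arithmetic midpoint under
   [t |-> 1 - exp (- t)], whose inverse is [x |-> - ln (1 - x)]. *)
Lemma strictly_convex_on_one_sub_exp_midpoint (g : R -> R) (x y : R) :
  strictly_convex_on (fun t => g (1 - exp (- t))) 0 p_infty ->
  0 < x < 1 -> 0 < y < 1 -> x <> y ->
  g (1 - sqrt ((1 - x) * (1 - y))) < (g x + g y) / 2.
Proof.
  intros g_convex hx hy x_ne_y.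
  assert (time_inv : forall z, z < 1 -> 1 - exp (- - ln (1 - z)) = z)
    by (intros z hz; rewrite Ropp_involutive, exp_ln; lra).
  assert (time_pos : forall z, 0 < z < 1 -> 0 < - ln (1 - z)).
  { intros z hz. assert (ln (1 - z) < 0) by (rewrite <- ln_1; apply ln_increasing; lra). lra. }
  assert (H := strictly_convex_on_midpoint _ 0 p_infty _ _ g_convex
                 (time_pos x hx) I (time_pos y hy) I).
  simpl in H. rewrite !time_inv, exp_opp_mean_ln_one_sub in H by lra.
  apply H. intros E. apply x_ne_y. rewrite <- (time_inv x), <- (time_inv y), E by lra. reflexivity.
Qed.

Lemma le_chain_eq_iff (p q r s : R) (P : Prop) : P \/ ~ P ->
  (P -> p = q /\ q = r /\ r = s) -> (~ P -> p < q /\ q < r /\ r < s) ->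
  p <= q /\ q <= r /\ r <= s /\ (p = q <-> P) /\ (q = r <-> P) /\ (r = s <-> P).
Proof.
  intros [HP | HnP] Heq Hlt.
  - destruct (Heq HP) as (? & ? & ?). repeat split; solve [lra | auto].
  - destruct (Hlt HnP) as (? & ? & ?). repeat split; intros; solve [lra | contradiction].
Qed.

Section Hyp2F1.

Variables a b : R.
Hypotheses (ha : 0 < a) (hb : 0 < b).

Local Notation coef := (hyp2F1_coef a b (a + b)).
Local Notation F := (PSeries coef).
Local Notation F' := (PSeries (PS_derive coef)).
Local Notation K := (PSeries (hyp2F1_kcoef a b)).

Lemma ex_pseries_hyp2F1 (x : R) : -1 < x < 1 -> ex_pseries coef x.
Proof. intros hx. apply CV_radius_inside, hyp2F1_coef_in_radius; lra. Qed.

Lemma ex_pseries_hyp2F1_derive (x : R) : -1 < x < 1 -> ex_pseries (PS_derive coef) x.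
Proof. intros hx. apply ex_pseries_derive, hyp2F1_coef_in_radius; lra. Qed.

Lemma is_derive_hyp2F1 (x : R) : -1 < x < 1 -> is_derive F x (F' x).
Proof. intros hx. apply is_derive_PSeries, hyp2F1_coef_in_radius; lra. Qed.

Lemma ex_pseries_hyp2F1_kcoef (x : R) : -1 < x < 1 -> ex_pseries (hyp2F1_kcoef a b) x.
Proof.
  intros hx.
  apply ex_pseries_ext with
    (PS_scal (/ (a * b)) (PS_minus (PS_derive coef) (PS_incr_1 (PS_derive coef)))).
  - intros n. unfold PS_scal at 1, scal; simpl; unfold mult; simpl.
    rewrite PS_derive_hyp2F1_coef_diff by assumption. field. lra.
  - apply ex_pseries_scal; [unfold mult; simpl; ring |].
    apply ex_pseries_minus; [| apply ex_pseries_incr_1]; apply ex_pseries_hyp2F1_derive; assumption.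
Qed.

Lemma one_sub_mul_hyp2F1_derive (x : R) : -1 < x < 1 -> (1 - x) * F' x = a * b * K x.
Proof.
  intros hx.
  transitivity (PSeries (PS_minus (PS_derive coef) (PS_incr_1 (PS_derive coef))) x).
  - rewrite PSeries_minus, PSeries_incr_1.
    + ring.
    + apply ex_pseries_hyp2F1_derive; assumption.
    + apply ex_pseries_incr_1, ex_pseries_hyp2F1_derive; assumption.
  - rewrite <- PSeries_scal. apply PSeries_ext. intros n.
    apply PS_derive_hyp2F1_coef_diff; assumption.
Qed.

Lemma hyp2F1_ge_1 (x : R) : 0 <= x < 1 -> 1 <= F x.
Proof.
  intros hx. rewrite <- (hyp2F1_coef_0 a b (a + b)).
  apply PSeries_ge_coef_0; [| lra | apply ex_pseries_hyp2F1; lra].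
  intros n. left. apply hyp2F1_coef_pos; lra.
Qed.

Lemma hyp2F1_kcoef_pos (n : nat) : 0 < hyp2F1_kcoef a b n.
Proof.
  unfold hyp2F1_kcoef. pose proof (pos_INR n).
  apply Rdiv_lt_0_compat; [apply hyp2F1_coef_pos |]; lra.
Qed.

Lemma is_derive_ln_hyp2F1 (x : R) : 0 < x < 1 ->
  is_derive (fun x => ln (F x)) x (F' x / F x).
Proof.
  intros hx. pose proof (hyp2F1_ge_1 x ltac:(lra)).
  evar (d : R). replace (F' x / F x) with d; [apply (is_derive_comp ln F) |].
  - apply is_derive_ln. lra.
  - apply is_derive_hyp2F1. lra.
  - unfold d, scal; simpl; unfold mult; simpl. field. lra.
Qed.

Lemma PSeries_hyp2F1_kcoef_pos (x : R) : 0 <= x < 1 -> 0 < K x.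
Proof.
  intros hx. apply Rlt_le_trans with (hyp2F1_kcoef a b 0); [apply hyp2F1_kcoef_pos |].
  apply PSeries_ge_coef_0; [| lra | apply ex_pseries_hyp2F1_kcoef; lra].
  intros n. left. apply hyp2F1_kcoef_pos.
Qed.

Lemma hyp2F1_log_derive_lt (u v : R) : 0 <= u -> u < v -> v < 1 ->
  F' u / F u < F' v / F v.
Proof.
  intros hu huv hv.
  assert (deriv_eq : forall n, PS_derive coef n = hyp2F1_deriv_ratio a b (a + b) n * coef n).
  { intros n. apply PS_derive_hyp2F1_coef. lra. }
  rewrite !(PSeries_ext _ _ _ deriv_eq).
  apply PSeries_weighted_mean_lt; try assumption.
  - intros n. apply hyp2F1_coef_pos; lra.
  - intros n. left. apply hyp2F1_deriv_ratio_lt_S; assumption.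
  - apply hyp2F1_deriv_ratio_lt_S; assumption.
  - apply ex_pseries_hyp2F1; lra.
  - apply ex_pseries_hyp2F1; lra.
  - apply (ex_pseries_ext _ _ _ deriv_eq), ex_pseries_hyp2F1_derive; lra.
  - apply (ex_pseries_ext _ _ _ deriv_eq), ex_pseries_hyp2F1_derive; lra.
Qed.

Lemma hyp2F1_div_PSeries_kcoef_lt (u v : R) : 0 <= u -> u < v -> v < 1 -> F u / K u < F v / K v.
Proof.
  intros hu huv hv.
  assert (coef_eq : forall n, coef n = (a + b + INR n) * hyp2F1_kcoef a b n).
  { intros n. unfold hyp2F1_kcoef. pose proof (pos_INR n). field. lra. }
  rewrite !(PSeries_ext _ _ _ coef_eq).
  apply PSeries_weighted_mean_lt; try assumption.
  - apply hyp2F1_kcoef_pos.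
  - intros n. rewrite S_INR. lra.
  - simpl. lra.
  - apply ex_pseries_hyp2F1_kcoef; lra.
  - apply ex_pseries_hyp2F1_kcoef; lra.
  - apply (ex_pseries_ext _ _ _ coef_eq), ex_pseries_hyp2F1; lra.
  - apply (ex_pseries_ext _ _ _ coef_eq), ex_pseries_hyp2F1; lra.
Qed.

Lemma is_derive_hyp2F1_exp (t : R) : 0 < t ->
  is_derive (fun t => F (1 - exp (- t))) t (a * b * K (1 - exp (- t))).
Proof.
  intros ht. pose proof (one_sub_exp_opp_bounds t ht).
  evar (d : R). replace (a * b * K (1 - exp (- t))) with d;
    [apply (is_derive_comp F (fun t => 1 - exp (- t))) |].
  - apply is_derive_hyp2F1. lra.
  - apply is_derive_one_sub_exp_opp.
  - unfold d, scal; simpl; unfold mult; simpl.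
    rewrite <- one_sub_mul_hyp2F1_derive by lra. ring.
Qed.

Lemma is_derive_ln_hyp2F1_exp (t : R) : 0 < t ->
  is_derive (fun t => ln (F (1 - exp (- t)))) t
            (a * b * K (1 - exp (- t)) / F (1 - exp (- t))).
Proof.
  intros ht. pose proof (one_sub_exp_opp_bounds t ht).
  pose proof (hyp2F1_ge_1 (1 - exp (- t)) ltac:(lra)).
  evar (d : R). replace (a * b * K (1 - exp (- t)) / F (1 - exp (- t))) with d;
    [apply (is_derive_comp ln (fun t => F (1 - exp (- t)))) |].
  - apply is_derive_ln. lra.
  - apply is_derive_hyp2F1_exp. assumption.
  - unfold d, scal; simpl; unfold mult; simpl. field. lra.
Qed.

Lemma strictly_convex_on_ln_hyp2F1 : strictly_convex_on (fun x => ln (F x)) 0 1.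
Proof.
  apply strictly_convex_on_of_derive_increasing with (fun x => F' x / F x).
  - intros x hx0 hx1. apply is_derive_ln_hyp2F1. simpl in *. lra.
  - intros u v hu hv huv. apply hyp2F1_log_derive_lt; simpl in *; lra.
Qed.

Lemma strictly_convex_on_hyp2F1_exp :
  strictly_convex_on (fun t => F (1 - exp (- t))) 0 p_infty.
Proof.
  apply strictly_convex_on_of_derive_increasing with (fun t => a * b * K (1 - exp (- t))).
  - intros t ht _. apply is_derive_hyp2F1_exp. assumption.
  - intros u v hu _ huv. simpl in hu.
    pose proof (one_sub_exp_opp_bounds u hu).
    pose proof (one_sub_exp_opp_bounds v ltac:(lra)).
    pose proof (one_sub_exp_opp_lt u v huv).
    apply Rmult_lt_compat_l; [nra |].
    apply PSeries_lt_of_coef_nonneg; try lra.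
    + intros n. left. apply hyp2F1_kcoef_pos.
    + apply hyp2F1_kcoef_pos.
    + apply ex_pseries_hyp2F1_kcoef. lra.
    + apply ex_pseries_hyp2F1_kcoef. lra.
Qed.

Lemma strictly_convex_on_opp_ln_hyp2F1_exp :
  strictly_convex_on (fun t => - ln (F (1 - exp (- t)))) 0 p_infty.
Proof.
  apply strictly_convex_on_of_derive_increasing
    with (fun t => - (a * b * K (1 - exp (- t)) / F (1 - exp (- t)))).
  - intros t ht _. apply (is_derive_opp (fun t => ln (F (1 - exp (- t))))).
    apply is_derive_ln_hyp2F1_exp. assumption.
  - intros u v hu _ huv. simpl in hu.
    pose proof (one_sub_exp_opp_bounds u hu).
    pose proof (one_sub_exp_opp_bounds v ltac:(lra)).
    pose proof (one_sub_exp_opp_lt u v huv).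
    set (x := 1 - exp (- u)) in *. set (y := 1 - exp (- v)) in *.
    pose proof (hyp2F1_ge_1 x ltac:(lra)). pose proof (hyp2F1_ge_1 y ltac:(lra)).
    pose proof (PSeries_hyp2F1_kcoef_pos x ltac:(lra)).
    pose proof (PSeries_hyp2F1_kcoef_pos y ltac:(lra)).
    assert (F x / K x < F y / K y) by (apply hyp2F1_div_PSeries_kcoef_lt; lra).
    apply Ropp_lt_contravar.
    replace (a * b * K x / F x) with (a * b / (F x / K x)) by (field; lra).
    replace (a * b * K y / F y) with (a * b / (F y / K y)) by (field; lra).
    apply Rmult_lt_compat_l; [nra |].
    apply Rinv_lt_contravar; [| assumption].
    apply Rmult_lt_0_compat; apply Rdiv_lt_0_compat; lra.
Qed.

Lemma hyp2F1_means_lt (x y : R) : 0 < x < 1 -> 0 < y < 1 -> x <> y ->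
  F ((x + y) / 2) < sqrt (F x * F y) /\
  sqrt (F x * F y) < F (1 - sqrt ((1 - x) * (1 - y))) /\
  F (1 - sqrt ((1 - x) * (1 - y))) < (F x + F y) / 2.
Proof.
  intros hx hy x_ne_y.
  pose proof (hyp2F1_ge_1 x ltac:(lra)). pose proof (hyp2F1_ge_1 y ltac:(lra)).
  pose proof (one_sub_sqrt_mul_bounds x y hx hy).
  pose proof (hyp2F1_ge_1 ((x + y) / 2) ltac:(lra)).
  pose proof (hyp2F1_ge_1 (1 - sqrt ((1 - x) * (1 - y))) ltac:(lra)).
  assert (ln_sqrt_F : ln (sqrt (F x * F y)) = (ln (F x) + ln (F y)) / 2)
    by (apply ln_sqrt_mult; lra).
  assert (0 < sqrt (F x * F y)) by (apply sqrt_lt_R0; nra).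
  split; [| split].
  - apply ln_lt_inv; [lra | assumption |]. rewrite ln_sqrt_F.
    apply (strictly_convex_on_midpoint _ 0 1 x y strictly_convex_on_ln_hyp2F1); simpl; lra.
  - apply ln_lt_inv; [assumption | lra |]. rewrite ln_sqrt_F.
    enough (- ln (F (1 - sqrt ((1 - x) * (1 - y)))) < (- ln (F x) + - ln (F y)) / 2) by lra.
    apply (strictly_convex_on_one_sub_exp_midpoint (fun x => - ln (F x)));
      [apply strictly_convex_on_opp_ln_hyp2F1_exp | assumption ..].
  - apply strictly_convex_on_one_sub_exp_midpoint;
      [apply strictly_convex_on_hyp2F1_exp | assumption ..].
Qed.

Lemma hyp2F1_means_diag (x : R) : 0 < x < 1 ->
  F ((x + x) / 2) = sqrt (F x * F x) /\
  sqrt (F x * F x) = F (1 - sqrt ((1 - x) * (1 - x))) /\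
  F (1 - sqrt ((1 - x) * (1 - x))) = (F x + F x) / 2.
Proof.
  intros hx. pose proof (hyp2F1_ge_1 x ltac:(lra)).
  rewrite !sqrt_square by lra.
  replace ((x + x) / 2) with x by field. replace (1 - (1 - x)) with x by ring.
  repeat split; field.
Qed.

End Hyp2F1.

Theorem theorem3p2 (a b : R) (ha : 0 < a) (hb : 0 < b) :
  let c := a + b in
  let F := fun x => hyp2F1 a b c x in
  convex_on (fun x => ln (F x)) (Finite 0) (Finite 1) /\
  concave_on (fun t => ln (F (1 - exp (- t)))) (Finite 0) p_infty /\
  convex_on (fun t => F (1 - exp (- t))) (Finite 0) p_infty /\
  (forall x y, 0 < x < 1 -> 0 < y < 1 ->
     F ((x + y) / 2) <= sqrt (F x * F y) /\
     sqrt (F x * F y) <= F (1 - sqrt ((1 - x) * (1 - y))) /\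
     F (1 - sqrt ((1 - x) * (1 - y))) <= (F x + F y) / 2 /\
     (F ((x + y) / 2) = sqrt (F x * F y) <-> x = y) /\
     (sqrt (F x * F y) = F (1 - sqrt ((1 - x) * (1 - y))) <-> x = y) /\
     (F (1 - sqrt ((1 - x) * (1 - y))) = (F x + F y) / 2 <-> x = y)).
Proof.
  intros c F.
  split; [apply strictly_convex_on_convex_on, strictly_convex_on_ln_hyp2F1; assumption |].
  split.
  { apply convex_on_opp_concave_on, strictly_convex_on_convex_on.
    apply strictly_convex_on_opp_ln_hyp2F1_exp; assumption. }
  split; [apply strictly_convex_on_convex_on, strictly_convex_on_hyp2F1_exp; assumption |].
  intros x y hx hy.
  apply le_chain_eq_iff; [apply Req_dec | intros <- | intros x_ne_y].
  - apply hyp2F1_means_diag; assumption.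
  - apply hyp2F1_means_lt; assumption.
Qed.
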